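(* Consider the following setup. Let $K<\infty$ and, for $i=1,\ldots,K$, let $\{T^{(i)}_{n_i}\}$ be a sequence of test statistics for testing $H_0^{(i)}:\theta_i\in\Theta_0^{(i)}$ against $\theta_i\in\Theta^{(i)}\setminus\Theta_0^{(i)}$, with $p$-values $p_i=p_i^{(n_i)}$, independent under the null for all sample sizes, each with exact slope $c_i(\theta_i)\ge0$ (i.e. $-\frac{2}{n_i}\log p_i^{(n_i)}\to c_i(\theta_i)$ with probability one as $n_i\to\infty$), where $c_i(\theta_i)=0$ for $\theta_i\in\Theta_0^{(i)}$ and $c_i(\theta_i)>0$ otherwise. Let $n=\frac1K\sum_in_i$, $n_i/n\to\lambda_i>0$, $\sum_i\lambda_i=K$, and assume $\lambda_1c_1(\theta_1)\ge\cdots\ge\lambda_Kc_K(\theta_K)\ge0$ with $c_i(\theta_i)>0$ exactly for $1\le i\le\ell$. For a fixed $\tau\in(0,1]$ define $$T_{\mathrm{TFhard}}(\tau)=\sum_{i=1}^K(-2\log p_i)\,\mathrm{I}_{\{p_i\le\tau\}},\qquad T_{\mathrm{TFsoft}}(\tau)=\sum_{i=1}^K(-2\log p_i+2\log\tau)_+,$$ where $(x)_+=\max(x,0)$. Then both tests are ABO, with exact slopes $C_{\mathrm{TFhard}}(\vec\theta)=C_{\mathrm{TFsoft}}(\vec\theta)=\sum_{i=1}^\ell\lambda_ic_i(\theta_i)$.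
   Context: The exact slope of a combination test with $p$-value $p$ (computed from its null distribution, under which $p_1,\ldots,p_K$ are i.i.d. Unif$(0,1)$) is the function $C(\vec\theta)$ with $-\frac{2}{n}\log p\to C(\vec\theta)$ with probability one as $n\to\infty$. A combination test is asymptotically Bahadur optimal (ABO) if its exact slope equals $\sum_{i=1}^\ell\lambda_ic_i(\theta_i)$. *)

From HB Require Import structures.
From mathcomp Require Import all_boot all_order all_algebra.
From mathcomp Require Import all_classical all_reals all_analysis.
Set Implicit Arguments. Unset Strict Implicit. Unset Printing Implicit Defensive.
Import Order.TTheory GRing.Theory Num.Theory.
Import numFieldNormedType.Exports.
Local Open Scope classical_set_scope.
Local Open Scope ring_scope.

Definition pospart {R : realType} (x : R) : R := Num.max x 0.

Definition TFhard {R : realType} (K : nat) (tau : R) (q : 'I_K -> R) : R :=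
  \sum_(i < K) (if q i <= tau then - 2 * ln (q i) else 0).

Definition TFsoft {R : realType} (K : nat) (tau : R) (q : 'I_K -> R) : R :=
  \sum_(i < K) pospart (- 2 * ln (q i) + 2 * ln tau).

Definition is_unif01 {d} {T : measurableType d} {R : realType}
  (Q : probability T R) (X : {RV Q >-> R}) : Prop :=
  forall x : R, 0 <= x <= 1 -> Q [set w | X w <= x] = x%:E.

Definition mutually_independent {d} {T : measurableType d} {R : realType}
  (K : nat) (Q : probability T R) (X : 'I_K -> {RV Q >-> R}) : Prop :=
  forall A : 'I_K -> set R, (forall i, measurable (A i)) ->
    Q (\bigcap_(i in [set: 'I_K]) (X i @^-1` A i)) =
    (\prod_(i < K) Q (X i @^-1` A i))%E.

(* p-value of a combination test with statistic Tst, observed value t,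
   computed from its null distribution: under the null model (Q, U),
   U_1..U_K are i.i.d. Unif(0,1) and p = Q[ Tst(U) >= t ]. *)
Definition comb_pvalue {d} {T : measurableType d} {R : realType}
  (K : nat) (Q : probability T R) (U : 'I_K -> {RV Q >-> R})
  (Tst : ('I_K -> R) -> R) (t : R) : R :=
  fine (Q [set w | t <= Tst (fun i => U i w)]).

From HB Require Import structures.
From mathcomp Require Import all_boot all_order all_algebra.
From mathcomp Require Import all_classical all_reals all_analysis.
From mathcomp Require Import lra ring zify.
Set Implicit Arguments. Unset Strict Implicit. Unset Printing Implicit Defensive.
Import Order.TTheory GRing.Theory Num.Theory.
Import numFieldNormedType.Exports.
Local Open Scope classical_set_scope.
Local Open Scope ring_scope.

(* Both statistics are sums of terms g(p_i), where g is within b = -2 ln tau of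
   Fisher's term -2 ln u on [0,1], is nonnegative, and has a tail no heavier than
   Fisher's: g(u) > 0 only if u <= exp(-g(u)/2).  Almost surely the observed
   statistic s therefore differs from Fisher's by O(1), so s/n tends to
   sum_i lam_i c_i.  Its null p-value is squeezed between exp(-(s+b)/2), the
   probability that one uniform is already small enough to push the statistic
   above s, and (M+1)^K exp(-M/2) with M = floor(s - K), a union bound over the
   cells of a discretisation of (g(U_1), ..., g(U_K)) whose probabilities
   factorise by independence.  Hence -2 ln p = s + O(log s), and dividing by n
   gives the same limit. *)

Lemma ln_le_tangent {R : realType} {a y : R} : 0 < a -> 0 < y ->
  ln y <= a * y - 1 - ln a.
Proof.
move=> a0 y0; have ay0 : 0 < a * y by rewrite mulr_gt0.
have : ln (1 + (a * y - 1)) <= a * y - 1 by apply: le_ln1Dx; lra.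
by rewrite subrKC lnM ?posrE //; lra.
Qed.

Section DivergentScale.
Context {R : realType} {n : nat -> R}.
Hypothesis n_oo : n @ \oo --> +oo.

Lemma lnD1_div_cvg0 (s : nat -> R) (L : R) :
  (\forall t \near \oo, 0 <= s t) -> (fun t => s t / n t) @ \oo --> L ->
  (fun t => ln (s t + 1) / n t) @ \oo --> 0.
Proof.
move=> s_ge0 /cvgrPdist_le sL; apply/cvgrPdist_le => e e0.
(* ln (s + 1) <= a s + O(1) with a so small that a s / n <= e / 2 eventually. *)
pose a := e / (2 * (`|L| + 1)).
have a0 : 0 < a by rewrite divr_gt0 // mulr_gt0 // ltr_pwDr.
have aL : a * (`|L| + 1) = e / 2.
  by rewrite /a mulrAC -mulf_div divff ?mulr1 // gt_eqF // ltr_pwDr.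
move/cvgryPge : n_oo => n_ge.
near=> t.
have nt0 : 0 < n t by apply: (lt_le_trans ltr01); near: t; exact: n_ge.
have st0 : 0 <= s t by near: t.
have close : `|L - s t / n t| <= 1 by near: t; exact: sL.
have nt_big : 2 * (a - 1 - ln a) / e <= n t by near: t; exact: n_ge.
have r_le : s t / n t <= `|L| + 1.
  by move: close; rewrite ler_norml; have := ler_norm L; lra.
have lnt := ln_le_tangent a0 (ltr_pwDr ltr01 st0).
have ln_ge0 : 0 <= ln (s t + 1) by rewrite ln_ge0 // lerDr.
rewrite sub0r normrN ger0_norm ?divr_ge0 ?(ltW nt0) // ler_pdivrMr //.
have ar : a * s t <= e / 2 * n t.
  rewrite -[s t](@divfK _ (n t)) ?gt_eqF // mulrA.
  by apply: ler_wpM2r; [exact: ltW | rewrite -aL ler_wpM2l // ltW].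
move: nt_big; rewrite ler_pdivrMr // => nt_big.
lra.
Unshelve. all: by end_near. Qed.

Lemma cvg_div_log_perturb (s x : nat -> R) (L B D : R) :
  (\forall t \near \oo, 0 <= s t /\ `|x t - s t| <= B + D * ln (s t + 1)) ->
  (fun t => s t / n t) @ \oo --> L -> (fun t => x t / n t) @ \oo --> L.
Proof.
move=> close sL.
have n_gt0 : \forall t \near \oo, 0 < n t by apply: cvgry_gt.
have invn0 : (fun t => (n t)^-1) @ \oo --> 0 by apply/gtr0_cvgV0.
pose h t := B / n t + D * (ln (s t + 1) / n t).
have h0 : h @ \oo --> 0.
  rewrite -[0]addr0 -{1}(mulr0 B) -{2}(mulr0 D).
  apply: cvgD; apply: cvgMr; first exact: invn0.
  by apply: (@lnD1_div_cvg0 s L _ sL); apply: filterS close => t [].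
have Nh0 : (fun t => - h t) @ \oo --> 0 by rewrite -oppr0; exact: cvgN.
have diff0 : (fun t => (x t - s t) / n t) @ \oo --> 0.
  apply: (squeeze_cvgr _ Nh0 h0).
  apply: filterS2 close n_gt0 => t [_ xs] nt0.
  rewrite -ler_norml normrM [`|_^-1|]gtr0_norm ?invr_gt0 //.
  by rewrite /h mulrA -mulrDl ler_wpM2r // invr_ge0 ltW.
rewrite -[L]addr0; apply: cvg_trans (cvgD sL diff0); apply: near_eq_cvg.
by near=> t; rewrite -mulrDl addrC subrK.
Unshelve. all: by end_near. Qed.

Lemma cvgn_of_ratio_gt0 {m : nat -> nat} {la : R} : 0 < la ->
  (fun t => (m t)%:R / n t) @ \oo --> la -> m @ \oo --> \oo.
Proof.
move=> la0 /cvgrPdist_le mla; apply/(@cvgrnyP R)/cvgryPge => A.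
have la2 : 0 < la / 2 by rewrite divr_gt0.
move/cvgryPge : n_oo => n_ge.
near=> t.
have nt0 : 0 < n t by apply: (lt_le_trans ltr01); near: t; exact: n_ge.
have nt_big : 2 * A / la <= n t by near: t; exact: n_ge.
have ratio_ge : la / 2 <= (m t)%:R / n t.
  have : `|la - (m t)%:R / n t| <= la / 2 by near: t; exact: mla.
  by rewrite ler_norml; lra.
have -> : A = la / 2 * (2 * A / la) by field; rewrite gt_eqF.
rewrite -[(m t)%:R](@divfK _ (n t)) ?gt_eqF //.
apply: le_trans (ler_wpM2l (ltW la2) nt_big) _.
by apply: ler_wpM2r => //; exact: ltW.
Unshelve. all: by end_near. Qed.

End DivergentScale.

Lemma fisher_sum_slope {R : realType} (K : nat) (n : nat -> R)
    (nn : 'I_K -> nat -> nat) (q : 'I_K -> nat -> R) (c lam : 'I_K -> R) :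
  n @ \oo --> +oo -> (forall i, 0 < lam i) ->
  (forall i, (fun t => (nn i t)%:R / n t) @ \oo --> lam i) ->
  (forall i, (fun m : nat => - 2 / m%:R * ln (q i m)) @ \oo --> c i) ->
  (fun t => (\sum_(i < K) - 2 * ln (q i (nn i t))) / n t) @ \oo -->
    \sum_(i < K) lam i * c i.
Proof.
move=> n_oo lam0 ratio slope.
have term i : (fun t => - 2 * ln (q i (nn i t)) / n t) @ \oo --> lam i * c i.
  have nn_oo := cvgn_of_ratio_gt0 n_oo (lam0 i) (ratio i).
  rewrite mulrC; apply: cvg_trans (cvgM (cvg_comp _ _ nn_oo (slope i)) (ratio i)).
  apply: near_eq_cvg; near=> t.
  have nnt : (nn i t)%:R != 0 :> R.
    by rewrite pnatr_eq0 -lt0n; near: t; exact: (cvgnyPgt _).1 nn_oo 0%N.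
  by rewrite /= mulrAC mulrA divfK // mulrAC.
rewrite (_ : (fun t => _) = \sum_(i < K) (fun t => - 2 * ln (q i (nn i t)) / n t)).
  apply: (big_ind2 (fun F l => F @ \oo --> l)) => //; first exact: cvg_cst.
  by move=> F1 l1 F2 l2; exact: cvgD.
by apply/funext => t; rewrite fct_sumE mulr_suml.
Unshelve. all: by end_near. Qed.

Definition sum_stat {R : realType} (K : nat) (g : R -> R) (q : 'I_K -> R) : R :=
  \sum_(i < K) g (q i).

(* The event [-2 ln u >= j], enlarged to all of R when j = 0 so that a Unif(0,1)
   variable lies in it with probability exactly exp(-j/2) for every j. *)
Definition log_tail {R : realType} (j : nat) : set R :=
  if j == 0%N then setT else `]-oo, expR (- j%:R / 2)]%classic.

Lemma measurable_log_tail {R : realType} (j : nat) : measurable (log_tail j : set R).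
Proof. by rewrite /log_tail; case: eqP. Qed.

Lemma measure_bigsetU_le {d} {T : measurableType d} {R : realType}
    (mu : {measure set T -> \bar R}) (I : Type) (s : seq I) (P : pred I)
    (B : I -> set T) :
  (forall k, measurable (B k)) ->
  (mu (\big[setU/set0]_(k <- s | P k) B k) <= \sum_(k <- s | P k) mu (B k))%E.
Proof.
move=> mB; elim: s => [|a s IH]; first by rewrite !big_nil measure0.
rewrite !big_cons; case: ifP => _ //.
apply: le_trans (measureU2 _ _ _) _ => //; first exact: bigsetU_measurable.
exact: leeD2l.
Qed.

Lemma truncn_subr_le_sum {R : realType} (K : nat) (y : 'I_K -> R) (t : R) :
  t <= \sum_(i < K) y i ->
  (Num.trunc (t - K%:R) <= \sum_(i < K) Num.trunc (y i))%N.
Proof.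
move=> ty; have [tK|tK] := leP 0 (t - K%:R); last first.
  by have -> : Num.trunc (t - K%:R) = 0%N by apply/truncn0Pn; rewrite -ltNge; lra.
rewrite -(ler_nat R); apply: le_trans (_ : _ <= t - K%:R) _; first by rewrite truncn_le.
rewrite lerBlDr natr_sum -[K in K%:R]card_ord -sumr_const -big_split /=.
apply: le_trans ty _; apply: ler_sum => i _.
by rewrite natr1 ltW // truncnS_gt.
Qed.

Lemma leq_minn_sum (I : Type) (r : seq I) (a : I -> nat) (M : nat) :
  (minn (\sum_(i <- r) a i) M <= \sum_(i <- r) minn (a i) M)%N.
Proof. by elim/big_rec2: _ => [|i y1 y2 _ IH]; [rewrite min0n | lia]. Qed.

Section UniformTail.
Context d (T : measurableType d) (R : realType) (Q : probability T R).
Variable X : {RV Q >-> R}.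
Hypothesis X_unif : is_unif01 X.

Lemma unif01_le0 : Q [set w | X w <= 0] = 0.
Proof. by rewrite X_unif // lexx ler01. Qed.

Lemma unif01_log_tail (j : nat) :
  Q (X @^-1` log_tail j) = (expR (- j%:R / 2))%:E.
Proof.
rewrite /log_tail; case: eqP => [->|_].
  by rewrite preimage_setT probability_setT oppr0 mul0r expR0.
rewrite -X_unif; last by rewrite expR_ge0 expR_le1 mulr_le0_ge0 // oppr_le0.
by congr (Q _); apply/seteqP; split => w /=; rewrite in_itv.
Qed.

End UniformTail.

Section SumStatistic.
Context d (T : measurableType d) (R : realType) (Q : probability T R) (K : nat).
Variable U : 'I_K -> {RV Q >-> R}.
Hypotheses (U_unif : forall i, is_unif01 (U i)) (U_indep : mutually_independent U).
(* Fisher's method is g u = -2 ln u, with b = 0. *)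
Variables (g : R -> R) (b : R).
Hypotheses (g_meas : measurable_fun setT g) (g_ge0 : forall u, 0 <= g u).
Hypothesis g_tail : forall u, 0 < g u -> u <= expR (- g u / 2).
Hypothesis g_fisher : forall u, 0 <= u <= 1 -> `|g u + 2 * ln u| <= b.

Let tail (t : R) := [set w | t <= sum_stat g (fun i => U i w)].

Let measurable_tail t : measurable (tail t).
Proof.
have mS : measurable_fun setT (fun w => sum_stat g (fun i => U i w)).
  by apply: measurable_sum => i; exact: measurableT_comp.
by rewrite /tail -preimage_itvcy -[_ @^-1` _]setTI; exact: mS.
Qed.

Let measurable_U_le i x : measurable [set w | U i w <= x].
Proof. by rewrite -preimage_itvNyc; exact: measurable_funPTI. Qed.

Lemma fisher_bound_ge0 : 0 <= b.
Proof. by apply: le_trans (g_fisher (u:=1) _); rewrite ?ler01 ?lexx. Qed.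

Lemma sum_stat_fisher_close (q : 'I_K -> R) : (forall i, 0 <= q i <= 1) ->
  `|sum_stat g q - \sum_(i < K) - 2 * ln (q i)| <= K%:R * b.
Proof.
move=> q01; rewrite -sumrB mulr_natl -[K in b *+ K]card_ord -sumr_const.
apply: le_trans (ler_norm_sum _ _ _) _; apply: ler_sum => i _.
by rewrite mulNr opprK; exact: g_fisher.
Qed.

Lemma sum_stat_tail_ge (s : R) : (0 < K)%N -> 0 <= s ->
  ((expR (- (s + b) / 2))%:E <= Q (tail s))%E.
Proof.
move=> K0 s0; set x := expR _; pose i0 := Ordinal K0.
have b0 := fisher_bound_ge0.
have x0 : 0 < x by exact: expR_gt0.
have x1 : x <= 1 by rewrite expR_le1; lra.
have g_small u : 0 < u <= x -> s <= g u.
  move=> /andP[u0 ux].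
  have : ln u <= - (s + b) / 2 by rewrite -(expRK (- (s + b) / 2)) ler_ln ?posrE.
  have := g_fisher (introT andP (conj (ltW u0) (le_trans ux x1))).
  rewrite ler_norml; lra.
rewrite -(U_unif i0); last by rewrite (ltW x0) x1.
(* ln vanishes on nonpositive reals, so [U i0 <= 0] is split off as a null event. *)
apply: (@le_trans _ _ (Q ([set w | U i0 w <= 0] `|` tail s))).
  apply: le_measure; rewrite ?inE; [exact: measurable_U_le|
                                     exact: measurableU (measurable_U_le _ _) _|].
  move=> w /= Ux; have [U0|U0] := leP (U i0 w) 0; [by left | right].
  rewrite /tail /sum_stat /= (bigD1 i0) //=; apply: le_trans (g_small (U i0 w) _) _.
    by rewrite U0 Ux.
  by rewrite lerDl sumr_ge0.
apply: le_trans (measureU2 _ _ _) _ => //.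
by rewrite [X in (X + _)%E](_ : _ = 0) ?add0e //; exact: unif01_le0.
Qed.

Lemma log_tail_of_le (j : nat) (u : R) : j%:R <= g u -> log_tail j u.
Proof.
rewrite /log_tail; case: eqP => // /eqP j0 jg; rewrite /= in_itv /=.
have j1 : 1 <= j%:R :> R by rewrite ler1n lt0n.
apply: le_trans (g_tail _) _; first lra.
by rewrite ler_expR; lra.
Qed.

Lemma sum_stat_tail_cover (t : R) (w : T) : tail t w ->
  exists k : {ffun 'I_K -> 'I_(Num.trunc (t - K%:R)).+1},
    (Num.trunc (t - K%:R) <= \sum_(i < K) k i)%N /\
    forall i, log_tail (k i) (U i w).
Proof.
set M := Num.trunc _ => tw; pose y i := g (U i w).
pose k i := minn (Num.trunc (y i)) M.
have kE i : (inord (k i) : 'I_M.+1) = k i :> nat.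
  by rewrite inordK // ltnS geq_minr.
exists [ffun i => inord (k i)]; split => [|i].
  under eq_bigr do rewrite ffunE kE.
  apply: leq_trans (leq_minn_sum _ _ _); rewrite leq_min leqnn andbT.
  exact: truncn_subr_le_sum.
rewrite ffunE kE; apply: log_tail_of_le.
have : (Num.trunc (y i))%:R <= y i by rewrite truncn_le g_ge0.
by apply: le_trans; rewrite ler_nat geq_minl.
Qed.

Lemma indep_log_tail_prob (k : 'I_K -> nat) :
  Q (\bigcap_(i in [set: 'I_K]) (U i @^-1` log_tail (k i))) =
  (expR (- (\sum_(i < K) k i)%:R / 2))%:E.
Proof.
rewrite U_indep; last by move=> i; exact: measurable_log_tail.
under eq_bigr do rewrite unif01_log_tail //.
rewrite prodEFin -expR_sum natr_sum -sumrN mulr_suml.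
by congr ((expR _)%:E); apply: eq_bigr.
Qed.

Lemma sum_stat_tail_le (t : R) :
  (Q (tail t) <= ((Num.trunc (t - K%:R)).+1 ^ K)%:R%:E *
                 (expR (- (Num.trunc (t - K%:R))%:R / 2))%:E)%E.
Proof.
set M := Num.trunc _.
pose cell (k : {ffun 'I_K -> 'I_M.+1}) :=
  \bigcap_(i in [set: 'I_K]) (U i @^-1` log_tail (k i)).
have mcell k : measurable (cell k).
  apply: fin_bigcap_measurable => [|i _]; first exact: finite_finset.
  exact: measurable_funPTI (measurable_log_tail (R:=R) _).
pose cells :=
  \big[setU/set0]_(k : {ffun 'I_K -> 'I_M.+1} | (M <= \sum_(i < K) k i)%N) cell k.
have cover : tail t `<=` cells.
  move=> w /sum_stat_tail_cover[k [Mk kw]].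
  by rewrite /cells (bigD1 k) //=; left => i _; exact: kw.
have mcells : measurable cells by apply: bigsetU_measurable => k _; exact: mcell.
apply: le_trans (le_measure Q (mem_set (measurable_tail t)) (mem_set mcells) cover) _.
apply: le_trans (measure_bigsetU_le Q _ _ mcell) _.
have -> : (M.+1 ^ K)%N = #|{ffun 'I_K -> 'I_M.+1}| by rewrite card_ffun !card_ord.
rewrite -EFinM mulr_natl -sumr_const -sumEFin big_mkcond /=.
apply: lee_sum => k _; case: ifP => Mk; last by rewrite lee_fin expR_ge0.
rewrite /cell indep_log_tail_prob lee_fin ler_expR.
have : M%:R <= (\sum_(i < K) k i)%:R :> R by rewrite ler_nat.
lra.
Qed.

Lemma sum_stat_pvalue_close (s : R) : (0 < K)%N -> 0 <= s ->
  `|- 2 * ln (comb_pvalue U (sum_stat g) s) - s| <=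
    (b + K%:R + 1) + 2 * K%:R * ln (s + 1).
Proof.
move=> K0 s0; have lo := sum_stat_tail_ge K0 s0; have hi := sum_stat_tail_le s.
set M := Num.trunc _ in hi.
have -> : comb_pvalue U (sum_stat g) s = fine (Q (tail s)) by [].
have [pv Qs] : exists pv, Q (tail s) = pv%:E.
  exists (fine (Q (tail s))); rewrite fineK // ge0_fin_numE ?measure_ge0 //.
  by apply: le_lt_trans hi _; rewrite ltry.
rewrite Qs /= in lo hi *; rewrite -EFinM !lee_fin in lo hi.
have pv0 : 0 < pv by apply: lt_le_trans lo; exact: expR_gt0.
have ln_lo : - (s + b) / 2 <= ln pv by rewrite -ler_expR lnK.
have M1 : 0 < M.+1%:R :> R by rewrite ltr0n.
have ln_hi : ln pv <= K%:R * ln M.+1%:R - M%:R / 2.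
  have : ln pv <= ln ((M.+1 ^ K)%:R * expR (- M%:R / 2)).
    by rewrite ler_ln ?posrE ?mulr_gt0 ?ltr0n ?expn_gt0 ?expR_gt0.
  rewrite lnM ?posrE ?ltr0n ?expn_gt0 ?expR_gt0 // expRK natrX lnXn //.
  by rewrite mulr_natl; lra.
have sM : s - K%:R < M.+1%:R by rewrite truncnS_gt.
have Ms : M%:R <= s.
  apply: le_trans (_ : (Num.trunc s)%:R <= s); last by rewrite truncn_le.
  by rewrite ler_nat le_truncn // lerBlDr lerDl.
have lnM1 : ln M.+1%:R <= ln (s + 1).
  by rewrite ler_ln ?posrE -?natr1 ?lerD2r //; lra.
have KlnM1 : K%:R * ln M.+1%:R <= K%:R * ln (s + 1) by rewrite ler_wpM2l.
have Kln_s : 0 <= K%:R * ln (s + 1) by rewrite mulr_ge0 // ln_ge0 // lerDr.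
have b0 := fisher_bound_ge0.
by rewrite ler_norml; lra.
Qed.

Lemma sum_stat_exact_slope (n : nat -> R) (q : nat -> 'I_K -> R) (L : R) :
  (0 < K)%N -> n @ \oo --> +oo -> (forall t i, 0 <= q t i <= 1) ->
  (fun t => (\sum_(i < K) - 2 * ln (q t i)) / n t) @ \oo --> L ->
  (fun t => - 2 / n t * ln (comb_pvalue U (sum_stat g) (sum_stat g (q t))))
    @ \oo --> L.
Proof.
move=> K0 n_oo q01 fisherL; pose s t := sum_stat g (q t).
have s0 t : 0 <= s t by apply: sumr_ge0 => i _.
have sL : (fun t => s t / n t) @ \oo --> L.
  apply: (cvg_div_log_perturb n_oo (B := K%:R * b) (D := 0) _ fisherL).
  near=> t; rewrite mul0r addr0; split; last exact: sum_stat_fisher_close.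
  apply: sumr_ge0 => i _; have := ln_le0 (andP (q01 t i)).2; lra.
rewrite (_ : (fun t => _) =
    (fun t => - 2 * ln (comb_pvalue U (sum_stat g) (s t)) / n t)).
  apply: (cvg_div_log_perturb n_oo _ sL); near=> t; split => //.
  exact: sum_stat_pvalue_close.
by apply/funext => t; rewrite mulrAC.
Unshelve. all: by end_near. Qed.

End SumStatistic.

Definition hard_term {R : realType} (tau u : R) : R :=
  if u <= tau then - 2 * ln u else 0.

Definition soft_term {R : realType} (tau u : R) : R :=
  pospart (- 2 * ln u + 2 * ln tau).

Lemma TFhardE {R : realType} (K : nat) (tau : R) :
  TFhard tau = sum_stat (K := K) (hard_term tau).
Proof. by []. Qed.

Lemma TFsoftE {R : realType} (K : nat) (tau : R) :
  TFsoft tau = sum_stat (K := K) (soft_term tau).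
Proof. by []. Qed.

Section Truncations.
Context {R : realType} {tau : R}.
Hypotheses (tau0 : 0 < tau) (tau1 : tau <= 1).

Lemma measurable_hard_term : measurable_fun setT (hard_term tau).
Proof.
apply: measurable_fun_ifT; last exact: measurable_cst.
  exact: measurable_realfun.measurable_fun_ler.
by apply: measurableT_comp => //; exact: measurable_ln.
Qed.

Lemma hard_term_ge0 (u : R) : 0 <= hard_term tau u.
Proof.
rewrite /hard_term; case: ifP => // u_tau.
by have := ln_le0 (le_trans u_tau tau1); lra.
Qed.

Lemma hard_term_tail (u : R) :
  0 < hard_term tau u -> u <= expR (- hard_term tau u / 2).
Proof.
rewrite /hard_term; case: ifP => _; last by rewrite ltxx.
have [u0|u0] := leP u 0; first by rewrite ln0 // mulr0 ltxx.
by move=> _; rewrite (_ : - (- 2 * ln u) / 2 = ln u) ?lnK //; field.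
Qed.

Lemma hard_term_fisher (u : R) : 0 <= u <= 1 ->
  `|hard_term tau u + 2 * ln u| <= - 2 * ln tau.
Proof.
move=> /andP[u0 u1]; have := ln_le0 tau1; rewrite /hard_term.
case: ifPn => [_|]; first by rewrite mulNr addNr normr0; lra.
rewrite -ltNge => tau_u; have := ln_le0 u1.
have : ln tau <= ln u by rewrite ler_ln ?posrE // ?ltW // (lt_trans tau0).
by rewrite add0r ler_norml; lra.
Qed.

Lemma measurable_soft_term : measurable_fun setT (soft_term tau).
Proof.
apply: measurable_realfun.measurable_maxr; last exact: measurable_cst.
apply: measurable_realfun.measurable_funD; last exact: measurable_cst.
by apply: measurableT_comp => //; exact: measurable_ln.
Qed.

Lemma soft_term_ge0 (u : R) : 0 <= soft_term tau u.
Proof. by rewrite /soft_term /pospart le_max lexx orbT. Qed.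

Lemma soft_term_tail (u : R) :
  0 < soft_term tau u -> u <= expR (- soft_term tau u / 2).
Proof.
rewrite /soft_term /pospart; have := ln_le0 tau1.
case: (leP (- 2 * ln u + 2 * ln tau) 0) => [_ _|pos ln_tau _]; first by rewrite ltxx.
have [u0|u0] := leP u 0; first by move: pos; rewrite ln0 //; lra.
by rewrite -{1}(lnK u0) ler_expR; lra.
Qed.

Lemma soft_term_fisher (u : R) : 0 <= u <= 1 ->
  `|soft_term tau u + 2 * ln u| <= - 2 * ln tau.
Proof.
move=> /andP[u0 u1]; rewrite /soft_term /pospart.
have := ln_le0 tau1; have := ln_le0 u1.
by case: (leP (- 2 * ln u + 2 * ln tau) 0) => h lnu lntau; rewrite ler_norml; lra.
Qed.

End Truncations.

Theorem theorem4 (R : realType) (K : nat) (l : nat)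
  (* the true data-generating probability space *)
  (d : measure_display) (Omega : measurableType d) (P : probability Omega R)
  (* p-values p_i^{(m)} of test i at sample size m *)
  (p : 'I_K -> nat -> Omega -> R)
  (* exact slopes c_i = c_i(theta_i) and limiting proportions lambda_i *)
  (c : 'I_K -> R) (lam : 'I_K -> R)
  (* sample sizes n_i(t) along the asymptotic sequence t -> oo *)
  (nn : 'I_K -> nat -> nat)
  (tau : R) :
  (0 < K)%N ->
  (forall (i : 'I_K) m w, 0 <= p i m w <= 1) ->
  (forall i, 0 <= c i) ->
  (forall i : 'I_K, (i < l)%N <-> 0 < c i) ->
  (forall i, {ae P, forall w,
      (\forall m \near \oo, 0 < p i m w) /\
      (fun m : nat => - 2 / m%:R * ln (p i m w)) @ \oo --> c i}) ->
  (forall i, 0 < lam i) ->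
  \sum_(i < K) lam i = K%:R ->
  (forall i j : 'I_K, (i <= j)%N -> lam j * c j <= lam i * c i) ->
  let nbar := fun t : nat => (\sum_(i < K) (nn i t)%:R) / K%:R in
  nbar @ \oo --> +oo ->
  (forall i, (fun t => (nn i t)%:R / nbar t) @ \oo --> lam i) ->
  0 < tau <= 1 ->
  forall (d' : measure_display) (Tn : measurableType d') (Q : probability Tn R)
    (U : 'I_K -> {RV Q >-> R}),
    (forall i, is_unif01 (U i)) -> mutually_independent U ->
    {ae P, forall w,
      (fun t => - 2 / nbar t *
         ln (comb_pvalue U (TFhard tau) (TFhard tau (fun i => p i (nn i t) w))))
        @ \oo --> \sum_(i < K | (i < l)%N) lam i * c i} /\
    {ae P, forall w,
      (fun t => - 2 / nbar t *
         ln (comb_pvalue U (TFsoft tau) (TFsoft tau (fun i => p i (nn i t) w))))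
        @ \oo --> \sum_(i < K | (i < l)%N) lam i * c i}.
Proof.
move=> K0 p01 c_ge0 c_gt0 p_slope lam0 _ _ nbar nbar_oo ratio /andP[tau0 tau1].
move=> d' Tn Q U U_unif U_indep.
have -> : \sum_(i < K | (i < l)%N) lam i * c i = \sum_(i < K) lam i * c i.
  rewrite big_mkcond; apply: eq_bigr => i _; case: ifPn => // /negP il.
  suff -> : c i = 0 by rewrite mulr0.
  by apply/eqP; rewrite eq_le c_ge0 andbT leNgt; apply/negP => /c_gt0.
have slopes : {ae P, forall w, forall i,
    (fun m : nat => - 2 / m%:R * ln (p i m w)) @ \oo --> c i}.
  by apply: filter_forall => i; apply: filterS (p_slope i) => w [].
split; apply: filterS slopes => w w_slopes; [rewrite TFhardE | rewrite TFsoftE].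
- apply: (sum_stat_exact_slope U_unif U_indep measurable_hard_term
    (hard_term_ge0 tau1) (@hard_term_tail _ tau) (hard_term_fisher tau0 tau1)) => //.
  exact: (fisher_sum_slope (q := fun i m => p i m w) nbar_oo lam0 ratio).
- apply: (sum_stat_exact_slope U_unif U_indep measurable_soft_term
    (@soft_term_ge0 _ tau) (soft_term_tail tau1) (soft_term_fisher tau1)) => //.
  exact: (fisher_sum_slope (q := fun i m => p i m w) nbar_oo lam0 ratio).
Qed.
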